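(* Let $m\in\mathbb{N}$, let $\mathbb{R}^m$ carry a norm, let $\mathcal{Y}\subseteq\mathbb{R}^m$ be bounded and let $\mathfrak{C}$ be a simplicial cover of $\mathcal{Y}$. Let $\{g_{\boldsymbol{v}}:\boldsymbol{v}\in V(\mathfrak{C})\}$ be the barycentric vertex interpolation function set for $\mathfrak{C}$, let $\{g_1,\ldots,g_k\}$ be obtained by removing one function from it, and let $\boldsymbol{g}:\mathcal{Y}\to\mathbb{R}^k$, $\boldsymbol{g}(\boldsymbol{x}):=(g_1(\boldsymbol{x}),\ldots,g_k(\boldsymbol{x}))^\top$. Assume $\operatorname{int}(\mathcal{Y})\cap\operatorname{int}(C)\ne\emptyset$ for all $C\in\mathfrak{C}$. Then there exist $\boldsymbol{x}_1,\ldots,\boldsymbol{x}_{k+1}\in\mathcal{Y}$ such that $\boldsymbol{g}(\boldsymbol{x}_1),\ldots,\boldsymbol{g}(\boldsymbol{x}_{k+1})$ are affinely independent.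
   Context: Faces: a convex $C'\subseteq C$ is a face of convex $C$ if $\lambda x_1+(1-\lambda)x_2\in C'$ ($0<\lambda<1$, $x_1,x_2\in C$) implies $x_1,x_2\in C'$; $V(C)$ is the set of extreme points. A simplicial cover of a bounded $\mathcal{Y}\subseteq\mathbb{R}^m$ is a finite collection $\mathfrak{C}$ of $m$-simplices whose union contains $\mathcal{Y}$ such that any two members with non-empty intersection intersect in a face of both. $\mathfrak{F}(\mathfrak{C})$: non-empty faces of members; $V(\mathfrak{C}):=\bigcup_{C}V(C)$. Every point $\boldsymbol{x}\in\bigcup_{C\in\mathfrak{C}}C$ lies in $\operatorname{relint}(F)$ for a unique $F\in\mathfrak{F}(\mathfrak{C})$ and has a unique representation $\boldsymbol{x}=\sum_{\boldsymbol{w}\in V(F)}\lambda^F_{\boldsymbol{w}}(\boldsymbol{x})\boldsymbol{w}$ with positive weights summing to $1$; the barycentric vertex interpolation function set is defined by $g_{\boldsymbol{v}}(\boldsymbol{x}):=\lambda^F_{\boldsymbol{v}}(\boldsymbol{x})$ if $\boldsymbol{v}\in V(F)$ and $g_{\boldsymbol{v}}(\boldsymbol{x}):=0$ otherwise, for $\boldsymbol{v}\in V(\mathfrak{C})$. *)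

From HB Require Import structures.
From mathcomp Require Import all_boot all_order all_algebra.
From mathcomp Require Import boolp classical_sets functions cardinality fsbigop reals.
Set Implicit Arguments. Unset Strict Implicit. Unset Printing Implicit Defensive.
Import Order.TTheory GRing.Theory Num.Theory.
Local Open Scope classical_set_scope.
Local Open Scope ring_scope.

Section Defs.
Variables (R : realType) (m : nat).
Local Notation V := 'rV[R]_m.

Definition is_norm (N : V -> R) : Prop :=
  [/\ forall x, N x = 0 -> x = 0,
      forall (a : R) x, N (a *: x) = `|a| * N x &
      forall x y, N (x + y) <= N x + N y].

Definition bounded_set (N : V -> R) (Y : set V) : Prop :=
  exists M : R, forall y, Y y -> N y <= M.

Definition interior_N (N : V -> R) (A : set V) : set V :=
  [set x | exists2 e : R, 0 < e & forall y, N (y - x) < e -> A y].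

Definition aff_hull (A : set V) : set V :=
  [set y | exists n (p : 'I_n -> V) (l : 'I_n -> R),
     [/\ forall i, A (p i), \sum_(i < n) l i = 1 & y = \sum_(i < n) l i *: p i]].

Definition relint_N (N : V -> R) (A : set V) : set V :=
  [set x | A x /\ exists2 e : R, 0 < e &
     forall y, aff_hull A y -> N (y - x) < e -> A y].

Definition convex_set (C : set V) : Prop :=
  forall x y (l : R), C x -> C y -> 0 <= l <= 1 -> C (l *: x + (1 - l) *: y).

Definition is_face (C' C : set V) : Prop :=
  [/\ convex_set C', C' `<=` C &
      forall x1 x2 (l : R), C x1 -> C x2 -> 0 < l < 1 ->
        C' (l *: x1 + (1 - l) *: x2) -> C' x1 /\ C' x2].

Definition extreme_points (C : set V) : set V :=
  [set x | C x /\ is_face [set x] C].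

Definition aff_indep (k n : nat) (p : 'I_n -> 'rV[R]_k) : Prop :=
  forall l : 'I_n -> R, \sum_(i < n) l i = 0 ->
    \sum_(i < n) l i *: p i = 0 -> forall i, l i = 0.

Definition conv_pts (n : nat) (p : 'I_n -> V) : set V :=
  [set x | exists l : 'I_n -> R,
     [/\ forall i, 0 <= l i, \sum_(i < n) l i = 1 & x = \sum_(i < n) l i *: p i]].

Definition is_simplex (C : set V) : Prop :=
  exists p : 'I_m.+1 -> V, aff_indep p /\ C = conv_pts p.

Definition simplicial_cover (Y : set V) (Cs : set (set V)) : Prop :=
  [/\ finite_set Cs,
      forall C, Cs C -> is_simplex C,
      Y `<=` \bigcup_(C in Cs) C &
      forall C1 C2, Cs C1 -> Cs C2 -> C1 `&` C2 !=set0 ->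
        is_face (C1 `&` C2) C1 /\ is_face (C1 `&` C2) C2].

Definition cover_faces (Cs : set (set V)) : set (set V) :=
  [set F | F !=set0 /\ exists2 C, Cs C & is_face F C].

Definition cover_vertices (Cs : set (set V)) : set V :=
  \bigcup_(C in Cs) extreme_points C.

(* g is the barycentric vertex interpolation function set for Cs
   (g v is the function g_v, for v in V(Cs)); it is characterized by its
   defining property: for x in relint(F), F in F(Cs), g_v(x) is the
   (unique, positive) barycentric weight of v in F if v in V(F), else 0. *)
Definition barycentric_interp (N : V -> R) (Cs : set (set V))
    (g : V -> V -> R) : Prop :=
  forall x F, (\bigcup_(C in Cs) C) x -> cover_faces Cs F -> relint_N N F x ->
    [/\ forall v, cover_vertices Cs v -> ~ extreme_points F v -> g v x = 0,
        forall w, extreme_points F w -> 0 < g w x,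
        \sum_(w \in extreme_points F) g w x = 1 &
        x = \sum_(w \in extreme_points F) g w x *: w].

End Defs.

From HB Require Import structures.
From mathcomp Require Import all_boot all_order all_algebra.
From mathcomp Require Import boolp classical_sets functions cardinality fsbigop reals.
From mathcomp Require Import ring lra.
Set Implicit Arguments. Unset Strict Implicit. Unset Printing Implicit Defensive.
Import Order.TTheory GRing.Theory Num.Theory.
Local Open Scope classical_set_scope.
Local Open Scope ring_scope.

(* Barycentric coordinates are affine along segments inside a simplex.  For a
   vertex v, take a simplex C containing v and a point x interior to both Y and
   C; for small t > 0 the point b = x + t (v - x) is still interior to both, and
   uniqueness of barycentric coordinates in C gives g(b) = (1 - t) g(x) + t e_v.
   So every e_v (the zero vector for the removed vertex, a unit vector for the
   others) lies in the affine hull of g(Y), which is therefore all of R^k, and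
   g(Y) must contain k + 1 affinely independent points.  That last step is
   linear algebra on the matrix whose rows are points y written as [1, y]. *)

Lemma sum_row_mx (V : nmodType) (I : Type) (r : seq I) (P : pred I) m n1 n2
    (A : I -> 'M[V]_(m, n1)) (B : I -> 'M[V]_(m, n2)) :
  \sum_(i <- r | P i) row_mx (A i) (B i) =
    row_mx (\sum_(i <- r | P i) A i) (\sum_(i <- r | P i) B i).
Proof. by elim/big_rec3: _ => [|i ? ? ? _ ->]; rewrite ?row_mx0 ?add_row_mx. Qed.

Lemma sum_scale_row_mx1 (R : pzRingType) k (I : finType) (l : I -> R) (q : I -> 'rV[R]_k) :
  \sum_i l i *: row_mx 1 (q i) = row_mx (\sum_i l i)%:M (\sum_i l i *: q i).
Proof.
rewrite raddf_sum -sum_row_mx.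
by apply: eq_bigr => i _; rewrite scale_row_mx scalemx1.
Qed.

Lemma sum_delta (R : pzSemiRingType) n (i : 'I_n) : \sum_(a < n) (a == i)%:R = 1 :> R.
Proof. by rewrite (bigD1 i) //= eqxx big1 ?addr0 // => a /negPf ->. Qed.

Lemma sum_delta_scale (R : pzRingType) (U : lmodType R) n (F : 'I_n -> U) i :
  \sum_(a < n) (a == i)%:R *: F a = F i.
Proof.
by rewrite (bigD1 i) //= eqxx scale1r big1 ?addr0 // => a /negPf ->; rewrite scale0r.
Qed.

Lemma fsbig_range_ord (U : nmodType) (T : choiceType) n (p : 'I_n -> T) (W : set T)
    (F : T -> U) :
  injective p -> W `<=` range p -> \sum_(w \in W) F w = \sum_(i < n | p i \in W) F (p i).
Proof.
move=> p_inj W_p; have WE : W = p @` [set i | W (p i)].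
  apply/seteqP; split => [w Ww|w [i /= Wi <-] //].
  by have [i _ pi] := W_p w Ww; exists i; rewrite /= pi.
rewrite {1}WE fsbig_image; last by move=> i j _ _; apply: p_inj.
rewrite [RHS](@bigfs U 0 +%R _ (index_enum 'I_n)) ?index_enum_uniq // => [|i _].
  by apply: eq_fsbigl; apply/seteqP; split => i; rewrite /= inE.
by rewrite mem_index_enum.
Qed.

Section AffineBasis.
Variables (R : realType) (k : nat).

Lemma aff_hull_segment (S : set 'rV[R]_k) x y c :
  S x -> S y -> aff_hull S (c *: x + (1 - c) *: y).
Proof.
move=> Sx Sy; exists 2, (fun i => if i == 0 then x else y).
exists (fun i => if i == 0 then c else 1 - c).
split=> [i||]; first by case: ifP.
all: by rewrite big_ord_recl big_ord1 //= addrC subrK.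
Qed.

Lemma aff_indep_row_free n (q : 'I_n -> 'rV[R]_k) :
  row_free (\matrix_j row_mx 1 (q j)) -> aff_indep q.
Proof.
move=> free l sum_l comb_l i.
suff /rowP/(_ i) : \row_j l j = 0 by rewrite !mxE.
apply: (row_free_inj free); rewrite mul0mx mulmx_sum_row.
under eq_bigr do rewrite rowK mxE.
by rewrite sum_scale_row_mx1 sum_l comb_l raddf0 row_mx0.
Qed.

Definition lift_mx (s : seq 'rV[R]_k) : 'M[R]_(size s, 1 + k) :=
  \matrix_(i < size s) row_mx 1 s`_i.

Lemma lift_mx_mem_sub s x : x \in s -> (row_mx 1 x <= lift_mx s)%MS.
Proof.
move=> xs; have i_lt : (index x s < size s)%N by rewrite index_mem.
have -> : row_mx 1 x = row (Ordinal i_lt) (lift_mx s) by rewrite rowK /= nth_index.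
exact: row_sub.
Qed.

Lemma lift_mx_sub s1 s2 : {subset s1 <= s2} -> (lift_mx s1 <= lift_mx s2)%MS.
Proof. by move=> s12; apply/row_subP => i; rewrite rowK lift_mx_mem_sub ?s12 ?mem_nth. Qed.

Lemma aff_hull_lift_mx (S : set 'rV[R]_k) x : aff_hull S x ->
  exists s, (forall y, y \in s -> S y) /\ (row_mx 1 x <= lift_mx s)%MS.
Proof.
move=> [n [p [l [Sp sum_l ->]]]]; exists (codom p); split=> [y /codomP[i ->] //|].
rewrite -[1]/(1%:M) -sum_l -sum_scale_row_mx1 summx_sub // => i _.
by rewrite scalemx_sub // lift_mx_mem_sub ?codom_f.
Qed.

Lemma lift_mx_full s : (row_mx 1 0 <= lift_mx s)%MS ->
  (forall i, (row_mx 1 (delta_mx 0 i) <= lift_mx s)%MS) -> row_full (lift_mx s).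
Proof.
move=> sub0 subD; rewrite -sub1mx; apply/row_subP => r; rewrite row1.
rewrite -(fintype.splitK r); case: (fintype.split r) => j /=.
  rewrite ord1 delta_mx_lshift (_ : delta_mx 0 0 = 1) //.
  by apply/rowP => i; rewrite ord1 !mxE.
rewrite delta_mx_rshift.
have -> : row_mx 0 (delta_mx 0 j) = row_mx 1 (delta_mx 0 j) - row_mx 1 0 :> 'rV[R]_(1 + k).
  by rewrite opp_row_mx add_row_mx subrr oppr0 addr0.
by rewrite addmx_sub // eqmx_opp.
Qed.

Lemma lift_mx_full_aff_basis s : row_full (lift_mx s) ->
  exists xs : 'I_k.+1 -> 'rV[R]_k, (forall j, xs j \in s) /\ aff_indep xs.
Proof.
move=> full; pose f := fullrankfun full.
exists (fun j => s`_(f j)); split=> [j|]; first exact: mem_nth.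
apply: aff_indep_row_free; have := fullrowsub_free full.
by congr row_free; apply/matrixP => i j; rewrite !mxE.
Qed.

Lemma aff_hull_aff_basis (S : set 'rV[R]_k) :
  aff_hull S 0 -> (forall i, aff_hull S (delta_mx 0 i)) ->
  exists xs : 'I_k.+1 -> 'rV[R]_k, (forall j, S (xs j)) /\ aff_indep xs.
Proof.
move=> hull0 hullD.
have /choice[s sP] o : exists s, (forall y, y \in s -> S y) /\
    (row_mx 1 (oapp (delta_mx 0) 0 o) <= lift_mx s)%MS.
  by case: o => [i|]; apply: aff_hull_lift_mx; [apply: hullD | apply: hull0].
pose t := flatten [seq s o | o <- enum {: option 'I_k}].
have sub_t o : (lift_mx (s o) <= lift_mx t)%MS.
  apply: lift_mx_sub => y y_so; apply/flattenP.
  by exists (s o) => //; apply: map_f; rewrite mem_enum.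
have [|xs [xs_t indep]] := @lift_mx_full_aff_basis t.
  apply: lift_mx_full; first exact: submx_trans (sP None).2 (sub_t None).
  by move=> i; exact: submx_trans (sP (Some i)).2 (sub_t (Some i)).
exists xs; split => // j; have /flattenP[_ /mapP[o _ ->]] := xs_t j.
exact: (sP o).1.
Qed.
End AffineBasis.

Section Norm.
Variables (R : realType) (m : nat) (N : 'rV[R]_m -> R).
Hypothesis normN : is_norm N.

Lemma normN0 : N 0 = 0.
Proof. by case: normN => _ hom _; rewrite -(scale0r 0) hom normr0 mul0r. Qed.

Lemma normNZ (a : R) x : 0 <= a -> N (a *: x) = a * N x.
Proof. by case: normN => _ hom _ a0; rewrite hom ger0_norm. Qed.

Lemma normN_ge0 x : 0 <= N x.
Proof.
case: normN => _ hom tri; have := tri x (- x).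
by rewrite subrr normN0 -scaleN1r hom normrN normr1 mul1r; lra.
Qed.

Lemma normN_sub_le x y z : N (x - z) <= N (x - y) + N (y - z).
Proof. by case: normN => _ _ tri; rewrite -[x - z](subrKA y). Qed.

Lemma interior_N_subset A : interior_N N A `<=` A.
Proof. by move=> x [e e0 ball]; apply: ball; rewrite subrr normN0. Qed.

Lemma interior_N_relint A : interior_N N A `<=` relint_N N A.
Proof.
move=> x xA; split; first exact: interior_N_subset.
by case: xA => e e0 ball; exists e => // y _ /ball.
Qed.

Lemma le_interior_N A B : A `<=` B -> interior_N N A `<=` interior_N N B.
Proof. by move=> AB x [e e0 ball]; exists e => // y /ball /AB. Qed.

Lemma interior_NI A B : interior_N N A `&` interior_N N B `<=` interior_N N (A `&` B).
Proof.
move=> x [[e1 e10 ball1] [e2 e20 ball2]].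
exists (Num.min e1 e2); first by rewrite lt_min e10 e20.
by move=> y; rewrite lt_min => /andP[y1 y2]; split; [exact: ball1 | exact: ball2].
Qed.

Lemma interior_N_ray A x v :
  interior_N N A x -> exists2 t, 0 < t & interior_N N A (x + t *: (v - x)).
Proof.
move=> [e e0 ball]; have d0 := normN_ge0 (v - x).
pose t := e / (2 * (N (v - x) + e)).
have t0 : 0 < t by rewrite divr_gt0 //; lra.
have tE : t * (2 * (N (v - x) + e)) = e by rewrite divfK //; lra.
exists t => //; exists (e / 2) => [|y yb]; first lra.
apply: ball; have := normN_sub_le y (x + t *: (v - x)) x.
rewrite addrAC subrr add0r (normNZ _ (ltW t0)); have := mulr_gt0 t0 e0; nra.
Qed.
End Norm.

Section Simplex.
Variables (R : realType) (m : nat).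
Local Notation V := 'rV[R]_m.

Lemma aff_indep_coef_eq n (p : 'I_n -> V) (l1 l2 : 'I_n -> R) : aff_indep p ->
  \sum_i l1 i = \sum_i l2 i -> \sum_i l1 i *: p i = \sum_i l2 i *: p i -> l1 =1 l2.
Proof.
move=> indep sum12 comb12 i; apply/eqP; rewrite -subr_eq0; apply/eqP.
apply: (indep (fun i => l1 i - l2 i)) => //; first by rewrite sumrB sum12 subrr.
by under eq_bigr do rewrite scalerBl; rewrite sumrB comb12 subrr.
Qed.

Lemma aff_indep_inj n (p : 'I_n -> V) : aff_indep p -> injective p.
Proof.
move=> indep i j pij.
have := @aff_indep_coef_eq n p (fun a => (a == i)%:R) (fun a => (a == j)%:R) indep.
rewrite !sum_delta !sum_delta_scale pij => /(_ erefl erefl i).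
by rewrite eqxx; case: (i =P j) => // _ /eqP; rewrite eq_sym pnatr_eq1.
Qed.

Lemma conv_pts_convex n (p : 'I_n -> V) : convex_set (conv_pts p).
Proof.
move=> x y t [lx [lx0 lx1 ->]] [ly [ly0 ly1 ->]] /andP[t0 t1].
exists (fun i => t * lx i + (1 - t) * ly i); split.
- by move=> i; rewrite addr_ge0 // mulr_ge0 // subr_ge0.
- by rewrite big_split /= -!mulr_sumr lx1 ly1 !mulr1 addrC subrK.
- rewrite !scaler_sumr -big_split /=; apply: eq_bigr => i _.
  by rewrite [RHS]scalerDl !scalerA.
Qed.

Lemma conv_pts_vertex n (p : 'I_n -> V) i : conv_pts p (p i).
Proof.
exists (fun a => (a == i)%:R).
by split; rewrite ?sum_delta ?sum_delta_scale // => a; rewrite ler0n.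
Qed.

Lemma conv_pts_peel n (p : 'I_n -> V) (l : 'I_n -> R) i :
    (forall j, 0 <= l j) -> \sum_j l j = 1 -> l i < 1 ->
  exists2 y, conv_pts p y & \sum_j l j *: p j = l i *: p i + (1 - l i) *: y.
Proof.
move=> l0 l1 li1; have li1' : 1 - l i != 0 by rewrite subr_eq0 gt_eqF.
exists ((1 - l i)^-1 *: (\sum_j l j *: p j - l i *: p i)); last first.
  by rewrite scalerA divff // scale1r addrC subrK.
exists (fun j => (1 - l i)^-1 * (l j - l i * (j == i)%:R)); split.
- move=> j; apply: mulr_ge0; first by rewrite invr_ge0 subr_ge0 ltW.
  by case: eqP => [->|_]; rewrite ?mulr1 ?subrr ?mulr0 ?subr0.
- by rewrite -mulr_sumr sumrB -mulr_sumr sum_delta l1 mulr1 mulVf.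
- under [RHS]eq_bigr do rewrite -scalerA scalerBl -scalerA.
  by rewrite -scaler_sumr sumrB -scaler_sumr sum_delta_scale.
Qed.

Lemma extreme_points_conv_pts n (p : 'I_n -> V) :
  extreme_points (conv_pts p) `<=` range p.
Proof.
move=> x [[l [l0 l1 xE]] [_ _ face]].
have [i li0] : exists i, 0 < l i.
  apply: contrapT => l_npos; move: l1; rewrite big1 => [/eqP|j _].
    by rewrite eq_sym oner_eq0.
  apply/eqP; rewrite eq_le l0 andbT leNgt; apply/negP => lj; apply: l_npos.
  by exists j.
exists i => //; have [li1|li1] := ltP (l i) 1.
  have [y y_conv xE'] := conv_pts_peel p l0 l1 li1.
  have := face (p i) y (l i) (conv_pts_vertex p i) y_conv.
  by rewrite li0 li1 -xE' -xE => /(_ erefl erefl) [].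
have l_rest : forall j, j != i -> l j = 0.
  apply/psumr_eq0P => [j _|]; first exact: l0.
  have : 0 <= \sum_(j | j != i) l j by apply: sumr_ge0 => j _; apply: l0.
  by move: l1; rewrite (bigD1 i) //=; lra.
rewrite xE (bigD1 i) //= big1 => [|j ji]; last first.
  by rewrite l_rest ?scale0r.
by move: l1; rewrite (bigD1 i) //= big1 // addr0 => ->; rewrite scale1r addr0.
Qed.

Lemma is_face_refl (C : set V) : convex_set C -> is_face C C.
Proof. by split. Qed.
End Simplex.

Section Barycentric.
Variables (R : realType) (m : nat) (N : 'rV[R]_m -> R).
Variables (Cs : set (set 'rV[R]_m)) (g : 'rV[R]_m -> 'rV[R]_m -> R).
Hypothesis bary : barycentric_interp N Cs g.
Variables (C : set 'rV[R]_m) (n : nat) (p : 'I_n -> 'rV[R]_m).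
Hypotheses (CsC : Cs C) (C_conv : C = conv_pts p) (indep : aff_indep p).

Lemma barycentric_interp_simplex x : relint_N N C x ->
  [/\ forall u, cover_vertices Cs u -> ~ extreme_points C u -> g u x = 0,
      \sum_(i < n | p i \in extreme_points C) g (p i) x = 1 &
      \sum_(i < n | p i \in extreme_points C) g (p i) x *: p i = x].
Proof.
move=> x_relint; have Cx := x_relint.1.
have C_face : cover_faces Cs C.
  split; first by exists x.
  by exists C => //; apply: is_face_refl; rewrite C_conv; apply: conv_pts_convex.
have [g0 _ sum_g comb_g] := bary (ex_intro2 _ _ C CsC Cx) C_face x_relint.
have W_p : extreme_points C `<=` range p by rewrite C_conv; apply: extreme_points_conv_pts.
have p_inj := aff_indep_inj indep.
split=> //; [rewrite -sum_g | rewrite [RHS]comb_g]; exact/esym/fsbig_range_ord.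
Qed.

Lemma barycentric_interp_ray v x t :
    extreme_points C v -> relint_N N C x -> relint_N N C (x + t *: (v - x)) ->
  forall u, cover_vertices Cs u ->
    g u (x + t *: (v - x)) = (1 - t) * g u x + t * (u == v)%:R.
Proof.
move=> Cv x_relint b_relint u Vu; set b := x + t *: (v - x) in b_relint *.
have [gx0 sum_x comb_x] := barycentric_interp_simplex x_relint.
have [gb0 sum_b comb_b] := barycentric_interp_simplex b_relint.
have [Cu|nCu] := pselect (extreme_points C u); last first.
  have /negPf -> : u != v by apply/eqP => uv; apply: nCu; rewrite uv.
  by rewrite gx0 // gb0 // /= mulr0n !mulr0 addr0.
have W_p : extreme_points C `<=` range p by rewrite C_conv; apply: extreme_points_conv_pts.
have [iu _ pu] := W_p u Cu; have [iv _ pv] := W_p v Cv.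
pose c y i := if p i \in extreme_points C then g (p i) y else 0.
have c_sum y : \sum_(i | p i \in extreme_points C) g (p i) y = \sum_i c y i.
  by rewrite big_mkcond.
have c_comb y : \sum_(i | p i \in extreme_points C) g (p i) y *: p i = \sum_i c y i *: p i.
  by rewrite big_mkcond; apply: eq_bigr => i _; rewrite /c; case: ifP; rewrite ?scale0r.
have c_eq : c b =1 (fun i => (1 - t) * c x i + t * (i == iv)%:R).
  apply: (aff_indep_coef_eq indep).
    by rewrite big_split /= -!mulr_sumr -!c_sum sum_x sum_b sum_delta !mulr1 subrK.
  under [RHS]eq_bigr do rewrite scalerDl -!scalerA.
  rewrite big_split /= -!scaler_sumr -!c_comb comb_x comb_b sum_delta_scale pv.
  by rewrite /b scalerBr scalerBl scale1r addrCA addrC.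
have := c_eq iu; rewrite /c pu (mem_set Cu) => ->.
by rewrite -pu -pv (inj_eq (aff_indep_inj indep)).
Qed.
End Barycentric.

Lemma vertex_indicator_aff_hull (R : realType) m (N : 'rV[R]_m -> R)
    (Y : set 'rV[R]_m) (Cs : set (set 'rV[R]_m)) (g : 'rV[R]_m -> 'rV[R]_m -> R)
    k (e : 'I_k -> 'rV[R]_m) v :
  is_norm N -> barycentric_interp N Cs g -> (forall C, Cs C -> is_simplex C) ->
  (forall C, Cs C -> interior_N N Y `&` interior_N N C !=set0) ->
  (forall i, cover_vertices Cs (e i)) -> cover_vertices Cs v ->
  aff_hull [set \row_i g (e i) x | x in Y] (\row_i (e i == v)%:R).
Proof.
move=> normN bary simplex int_YC e_vert [C CsC Cv].
have [p [indep C_conv]] := simplex C CsC.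
have [x [Yx Cx]] := int_YC C CsC.
have [t t0 b_int] := interior_N_ray normN v (interior_NI (conj Yx Cx)).
have ray := barycentric_interp_ray bary CsC C_conv indep Cv (interior_N_relint normN Cx)
  (interior_N_relint normN (le_interior_N (@subIsetr _ Y C) b_int)).
have -> : \row_i (e i == v)%:R =
    t^-1 *: \row_i g (e i) (x + t *: (v - x)) + (1 - t^-1) *: \row_i g (e i) x.
  by apply/rowP => i; rewrite !mxE ray //; field; rewrite lt0r_neq0.
apply: aff_hull_segment; [exists (x + t *: (v - x)) | exists x] => //.
  exact: (interior_N_subset normN b_int).1.
exact: (interior_N_subset normN Yx).
Qed.

Theorem proposition3p11 (R : realType) (m : nat) (N : 'rV[R]_m -> R)
  (Y : set 'rV[R]_m) (Cs : set (set 'rV[R]_m)) (g : 'rV[R]_m -> 'rV[R]_m -> R)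
  (v0 : 'rV[R]_m) (k : nat) (e : 'I_k -> 'rV[R]_m) :
  is_norm N -> bounded_set N Y -> simplicial_cover Y Cs ->
  barycentric_interp N Cs g ->
  cover_vertices Cs v0 ->
  (forall i, cover_vertices Cs (e i) /\ e i <> v0) ->
  injective e ->
  (forall v, cover_vertices Cs v -> v <> v0 -> exists i, e i = v) ->
  (forall C, Cs C -> interior_N N Y `&` interior_N N C !=set0) ->
  exists xs : 'I_k.+1 -> 'rV[R]_m,
    (forall j, Y (xs j)) /\
    aff_indep (fun j => \row_(i < k) g (e i) (xs j)).
Proof.
move=> normN _ [_ simplex _ _] bary Vv0 e_vert e_inj _ int_YC.
have hull_delta :=
  vertex_indicator_aff_hull normN bary simplex int_YC (fun i => (e_vert i).1).
have hull0 : aff_hull [set \row_i g (e i) x | x in Y] 0.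
  rewrite (_ : 0 = \row_i (e i == v0)%:R); first exact: hull_delta Vv0.
  apply/rowP => i; rewrite !mxE; case: eqP => // ei_v0.
  by have [_ /(_ ei_v0)] := e_vert i.
have hullD i : aff_hull [set \row_i g (e i) x | x in Y] (delta_mx 0 i).
  rewrite (_ : delta_mx 0 i = \row_j (e j == e i)%:R); first exact: hull_delta (e_vert i).1.
  by apply/rowP => j; rewrite !mxE (inj_eq e_inj).
have [ys [Y_ys indep]] := aff_hull_aff_basis hull0 hullD.
have /choice[xs xsP] j : exists x, Y x /\ \row_i g (e i) x = ys j.
  by have [x] := Y_ys j; exists x.
exists xs; split=> [j|]; first exact: (xsP j).1.
by rewrite (_ : (fun j => _) = ys) //; apply/funext => j; rewrite (xsP j).2.
Qed.
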